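(* Let $U$ be a finite set, $d$ an $\alpha$-relaxed semi-metric distance on $U$ with $\alpha\ge 1$, $\mathcal{M}=\langle U,\mathcal{F}\rangle$ a matroid, and $S,O$ two bases of $\mathcal{M}$. Let $A=O\cap S$, $B=S\setminus A=\{b_1,\dots,b_t\}$, $C=O\setminus A$, and let $g:B\to C$ be a bijection such that $S-b+g(b)\in\mathcal{F}$ for every $b\in B$; set $c_i=g(b_i)$. If $t>2$, then $$\alpha\Big(d(B,C)-\sum_{i=1}^t d(b_i,c_i)\Big)\;\ge\; d(C).$$
   Context: An $\alpha$-relaxed semi-metric distance on $U$ (with $\alpha\ge 1$) is a function $d:U\times U\to\mathbb{R}_{\ge 0}$ with $d(u,v)=d(v,u)$, $d(u,u)=0$, satisfying $d(u,v)\le \alpha\,(d(v,w)+d(w,u))$ for all $u,v,w\in U$. For $X\subseteq U$, $d(X)=\sum_{\{u,v\}\subseteq X,\,u\ne v} d(u,v)$; for disjoint $X,Y$, $d(X,Y)=\sum_{x\in X,y\in Y} d(x,y)$. $S-b+c$ denotes $(S\setminus\{b\})\cup\{c\}$. *)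

From mathcomp Require Import all_boot all_order all_algebra.
Set Implicit Arguments. Unset Strict Implicit. Unset Printing Implicit Defensive.
Import Order.TTheory GRing.Theory Num.Theory.
Local Open Scope ring_scope.

Definition relaxed_semimetric (U : finType) (R : realFieldType)
  (alpha : R) (d : U -> U -> R) : Prop :=
  1 <= alpha /\
  (forall u v, 0 <= d u v) /\
  (forall u v, d u v = d v u) /\
  (forall u, d u u = 0) /\
  (forall u v w, d u v <= alpha * (d v w + d w u)).

Definition is_matroid (U : finType) (F : {set {set U}}) : Prop :=
  set0 \in F /\
  (forall X Y : {set U}, Y \in F -> X \subset Y -> X \in F) /\
  (forall X Y : {set U}, X \in F -> Y \in F -> #|X| < #|Y| ->
     exists2 y, y \in Y :\: X & y |: X \in F)%N.

Definition is_basis (U : finType) (F : {set {set U}}) (S : {set U}) : Prop :=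
  S \in F /\ (forall T : {set U}, T \in F -> S \subset T -> T = S).

(* d(X): sum over unordered pairs {u,v} of distinct elements of X *)
Definition dset (U : finType) (R : realFieldType) (d : U -> U -> R)
  (X : {set U}) : R :=
  \sum_(u in X) \sum_(v in X | (enum_rank u < enum_rank v)%N) d u v.

Definition dcross (U : finType) (R : realFieldType) (d : U -> U -> R)
  (X Y : {set U}) : R :=
  \sum_(x in X) \sum_(y in Y) d x y.

From mathcomp Require Import all_boot all_order all_algebra.
Import Order.TTheory GRing.Theory Num.Theory.
Local Open Scope ring_scope.

(* For distinct b_i, b_j and a third index k, the relaxed triangle inequality
   through b_k gives d(c_i, c_j) <= alpha (d(b_k, c_i) + d(b_k, c_j)).
   Summing over the t - 2 choices of k and over all ordered pairs (i, j), each
   off-diagonal term d(b_k, c_i) occurs 2 (t - 2) times on the right, while the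
   left is 2 (t - 2) d(C); as t > 2 the common factor cancels. *)

Section PairSums.
Context {U : finType} {V : nmodType}.
Implicit Types (X : {set U}) (f : U -> U -> V).

Lemma exchange_sum_in X (P : rel U) f :
  \sum_(u in X) \sum_(v in X | P u v) f u v =
  \sum_(v in X) \sum_(u in X | P u v) f u v.
Proof.
rewrite (exchange_big_dep (mem X)) /=; last by move=> u v _ /andP[].
by apply: eq_bigr => v vX; apply: eq_bigl => u; rewrite vX.
Qed.

Lemma exchange_sum_setD1 X f :
  \sum_(u in X) \sum_(v in X :\ u) f u v =
  \sum_(v in X) \sum_(u in X :\ v) f u v.
Proof.
rewrite (eq_bigr (fun u => \sum_(v in X | v != u) f u v)); last first.
  by move=> u _; apply: eq_bigl => v; rewrite !inE andbC.
rewrite exchange_sum_in; apply: eq_bigr => v _; apply: eq_bigl => u.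
by rewrite !inE eq_sym andbC.
Qed.

Lemma sum_setD1_sym X f : (forall u v, f u v = f v u) ->
  \sum_(u in X) \sum_(v in X :\ u) f u v =
  (\sum_(u in X) \sum_(v in X | (enum_rank u < enum_rank v)%N) f u v) *+ 2.
Proof.
move=> f_sym.
have rank_split u : \sum_(v in X :\ u) f u v =
    \sum_(v in X | (enum_rank u < enum_rank v)%N) f u v +
    \sum_(v in X | (enum_rank v < enum_rank u)%N) f v u.
  rewrite (bigID (fun v => enum_rank u < enum_rank v)%N) /=.
  congr (_ + _); apply: eq_big => [v|v _]; rewrite ?[f u v]f_sym // !inE;
    case: (eqVneq v u) => [->|nvu]; rewrite ?ltnn ?andbF //=.
  rewrite -leqNgt leq_eqVlt (inj_eq (@ord_inj _)) (inj_eq enum_rank_inj).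
  by rewrite (negPf nvu).
rewrite (eq_bigr _ (fun u _ => rank_split u)) big_split /= mulr2n.
by rewrite [X in _ + X]exchange_sum_in.
Qed.

Lemma cardsD1D1 {X : {set U}} {x y : U} : x \in X -> y \in X :\ x ->
  #|X :\ x :\ y| = (#|X| - 2)%N.
Proof.
move=> xX yXx; have := cardsD1 x X; have := cardsD1 y (X :\ x).
by rewrite xX yXx !add1n => -> ->; rewrite subn2.
Qed.

Lemma sum_setD1D1_l X f :
  \sum_(x in X) \sum_(y in X :\ x) \sum_(k in X :\ x :\ y) f k x =
  (\sum_(x in X) \sum_(k in X :\ x) f k x) *+ (#|X| - 2).
Proof.
rewrite -sumrMnl; apply: eq_bigr => x xX.
rewrite (exchange_sum_setD1 (X :\ x) (fun _ k => f k x)) -sumrMnl.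
by apply: eq_bigr => k kXx; rewrite sumr_const (cardsD1D1 xX kXx).
Qed.

Lemma sum_setD1D1_r X f :
  \sum_(x in X) \sum_(y in X :\ x) \sum_(k in X :\ x :\ y) f k y =
  (\sum_(x in X) \sum_(k in X :\ x) f k x) *+ (#|X| - 2).
Proof.
rewrite (exchange_sum_setD1 X (fun x y => \sum_(k in X :\ x :\ y) f k y)).
rewrite -sum_setD1D1_l; apply: eq_bigr => y _.
by apply: eq_bigr => x _; rewrite !setDDl setUC.
Qed.

End PairSums.

Section RelaxedTriangle.
Context {U : finType} {R : realFieldType}.
Variables (alpha : R) (d : U -> U -> R).
Hypothesis d_sym : forall u v, d u v = d v u.
Hypothesis d_relaxed : forall u v w, d u v <= alpha * (d v w + d w u).

Lemma relaxed_mulrn_le (K : {set U}) p q :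
  d p q *+ #|K| <= alpha * \sum_(k in K) (d k p + d k q).
Proof.
rewrite -sumr_const mulr_sumr; apply: ler_sum => k _.
by rewrite addrC (d_sym k q).
Qed.

Variables (B : {set U}) (g : U -> U).
Hypothesis g_inj : {in B &, injective g}.

Lemma sum_imset_setD1 (h : U -> R) x : x \in B ->
  \sum_(v in g @: B :\ g x) h v = \sum_(y in B :\ x) h (g y).
Proof.
move=> xB; apply: (@addrI _ (h (g x))).
by rewrite -big_setD1 ?imset_f // big_imset // (big_setD1 x xB).
Qed.

Lemma dcross_imset_sub_diag :
  dcross d B (g @: B) - \sum_(b in B) d b (g b) =
  \sum_(x in B) \sum_(k in B :\ x) d k (g x).
Proof.
rewrite /dcross (eq_bigr (fun b => d b (g b) + \sum_(y in B :\ b) d b (g y))).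
  by rewrite big_split /= addrAC subrr add0r exchange_sum_setD1.
by move=> b bB; rewrite big_imset // (big_setD1 b bB).
Qed.

Lemma dset_imset_mulr2n :
  dset d (g @: B) *+ 2 = \sum_(x in B) \sum_(y in B :\ x) d (g x) (g y).
Proof.
rewrite /dset -sum_setD1_sym // big_imset //=.
by apply: eq_bigr => x xB; rewrite sum_imset_setD1.
Qed.

Lemma dset_imset_le : (2 < #|B|)%N ->
  dset d (g @: B) <= alpha * (dcross d B (g @: B) - \sum_(b in B) d b (g b)).
Proof.
move=> B_gt2; rewrite dcross_imset_sub_diag.
suff : (dset d (g @: B) *+ 2) *+ (#|B| - 2) <=
       alpha * (\sum_(x in B) \sum_(k in B :\ x) d k (g x)) *+ 2 *+ (#|B| - 2).
  by rewrite !lerMn2r subn_eq0 leqNgt B_gt2.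
rewrite dset_imset_mulr2n mulrnAC -mulrnAr mulr2n -mulrDr.
rewrite -{1}(sum_setD1D1_l B (fun k x => d k (g x))).
rewrite -(sum_setD1D1_r B (fun k x => d k (g x))).
rewrite -big_split mulr_sumr -sumrMnl; apply: ler_sum => x xB.
rewrite -sumrMnl -big_split mulr_sumr /=.
apply: ler_sum => y yBx; rewrite -big_split -(cardsD1D1 xB yBx).
exact: relaxed_mulrn_le.
Qed.

End RelaxedTriangle.

Theorem lemma4 (U : finType) (R : realFieldType) (alpha : R)
  (d : U -> U -> R) (F : {set {set U}}) (S O : {set U}) (g : U -> U) :
  relaxed_semimetric alpha d ->
  is_matroid F ->
  is_basis F S -> is_basis F O ->
  let A := O :&: S in
  let B := S :\: A in
  let C := O :\: A in
  {in B &, injective g} ->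
  g @: B = C ->
  (forall b, b \in B -> (g b |: (S :\ b)) \in F) ->
  (2 < #|B|)%N ->
  alpha * (dcross d B C - \sum_(b in B) d b (g b)) >= dset d C.
Proof.
(* Only the bijection g : B -> C matters. *)
move=> [_ [_ [d_sym [_ d_relaxed]]]] _ _ _ A B C g_inj gB _ B_gt2.
by rewrite -gB; apply: dset_imset_le.
Qed.
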